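(* Let $\beta_\bullet\in\{\beta,\beta_v\}$, let $\to_{\beta_\bullet}$ be the contextual closure of the rule $\beta_\bullet$ on $\Lambda_{\mathcal O}$, and let $\rightsquigarrow_U$ be the unbiased iteration of an associated surface reduction (as defined in the context). Then $\rightsquigarrow_U$ is a normalizing strategy for $\to_{\beta_\bullet}$.
   Context: Terms: $M::=x\mid\lambda x.M\mid MM\mid \mathsf{op}(M,\dots,M)$, $\mathsf{op}$ ranging over a (possibly empty) set $\mathcal O$ of operator symbols with fixed arities, up to renaming of bound variables; this set is $\Lambda_{\mathcal O}$. Values $V::=x\mid\lambda x.M$. Contexts $C::=[\,]\mid MC\mid CM\mid\lambda x.C\mid\mathsf{op}(M,\dots,C,\dots,M)$. Rules $(\lambda x.M)N\mapsto_\beta M\{N/x\}$; $(\lambda x.M)V\mapsto_{\beta_v}M\{V/x\}$ ($V$ a value); $\to_{\beta_\bullet}$ is the closure under all contexts. Head contexts $H::=[\,]\mid\lambda x.H\mid HM$; weak $W::=[\,]\mid WM\mid MW$; left $L::=[\,]\mid LM\mid VL$; right $R::=[\,]\mid MR\mid RV$. Surface reduction $\to_s$: for $\beta$, closure of $\beta$ under head contexts; for $\beta_v$, closure of $\beta_v$ under weak, or left, or right contexts (any one choice). $\rightsquigarrow_U$ is defined inductively: if $M\to_sM'$ then $M\rightsquigarrow_UM'$; if $M$ is $\to_s$-normal: $\lambda x.P\rightsquigarrow_U\lambda x.P'$ if $P\rightsquigarrow_UP'$; $PQ\rightsquigarrow_UP'Q$ if $P\rightsquigarrow_UP'$; $PQ\rightsquigarrow_UPQ'$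 if $Q\rightsquigarrow_UQ'$; $\mathsf{op}(\dots,P_i,\dots)\rightsquigarrow_U\mathsf{op}(\dots,P_i',\dots)$ if $P_i\rightsquigarrow_UP_i'$. A relation $\rightsquigarrow\subseteq\to$ is a normalizing strategy for $\to$ if it has the same normal forms as $\to$ and, whenever $t$ has a $\to$-normal form (i.e. $t\to^*u$ with $u$ $\to$-normal), every maximal $\rightsquigarrow$-sequence from $t$ (infinite, or finite ending in a $\rightsquigarrow$-normal form) ends in a $\to$-normal form. *)

(* Lambda terms with operators, up to alpha-equivalence,
   represented with de Bruijn indices. *)
From Stdlib Require Import Arith List Relations.
Import ListNotations.

Section Terms.
Variable O : Type.

Inductive term : Type :=
| Var : nat -> term
| Lam : term -> term
| App : term -> term -> term
| Op  : O -> list term -> term.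

Inductive wf (arity : O -> nat) : term -> Prop :=
| wf_var : forall n, wf arity (Var n)
| wf_lam : forall b, wf arity b -> wf arity (Lam b)
| wf_app : forall t u, wf arity t -> wf arity u -> wf arity (App t u)
| wf_op  : forall o args, length args = arity o ->
    (forall a, In a args -> wf arity a) -> wf arity (Op o args).

Fixpoint lift (k : nat) (t : term) : term :=
  match t with
  | Var n => if n <? k then Var n else Var (S n)
  | Lam b => Lam (lift (S k) b)
  | App t u => App (lift k t) (lift k u)
  | Op o args => Op o (map (lift k) args)
  end.

Fixpoint subst (k : nat) (N : term) (t : term) : term :=
  match t with
  | Var n => if n <? k then Var n else if n =? k then N else Var (pred n)
  | Lam b => Lam (subst (S k) (lift 0 N) b)
  | App t u => App (subst k N t) (subst k N u)
  | Op o args => Op o (map (subst k N) args)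
  end.

Definition is_value (t : term) : Prop :=
  match t with Var _ | Lam _ => True | _ => False end.

Inductive beta_rule : term -> term -> Prop :=
| beta_root : forall M N, beta_rule (App (Lam M) N) (subst 0 N M).

Inductive betav_rule : term -> term -> Prop :=
| betav_root : forall M V, is_value V -> betav_rule (App (Lam M) V) (subst 0 V M).

Inductive ctx_closure (r : term -> term -> Prop) : term -> term -> Prop :=
| cc_root : forall t u, r t u -> ctx_closure r t u
| cc_lam : forall t t', ctx_closure r t t' -> ctx_closure r (Lam t) (Lam t')
| cc_appl : forall t t' u, ctx_closure r t t' -> ctx_closure r (App t u) (App t' u)
| cc_appr : forall t u u', ctx_closure r u u' -> ctx_closure r (App t u) (App t u')
| cc_op : forall o l1 M M' l2, ctx_closure r M M' ->
    ctx_closure r (Op o (l1 ++ M :: l2)) (Op o (l1 ++ M' :: l2)).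

Inductive head_closure (r : term -> term -> Prop) : term -> term -> Prop :=
| hc_root : forall t u, r t u -> head_closure r t u
| hc_lam : forall t t', head_closure r t t' -> head_closure r (Lam t) (Lam t')
| hc_appl : forall t t' u, head_closure r t t' -> head_closure r (App t u) (App t' u).

Inductive weak_closure (r : term -> term -> Prop) : term -> term -> Prop :=
| wc_root : forall t u, r t u -> weak_closure r t u
| wc_appl : forall t t' u, weak_closure r t t' -> weak_closure r (App t u) (App t' u)
| wc_appr : forall t u u', weak_closure r u u' -> weak_closure r (App t u) (App t u').

Inductive left_closure (r : term -> term -> Prop) : term -> term -> Prop :=
| lc_root : forall t u, r t u -> left_closure r t u
| lc_appl : forall t t' u, left_closure r t t' -> left_closure r (App t u) (App t' u)
| lc_appr : forall v u u', is_value v -> left_closure r u u' ->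
    left_closure r (App v u) (App v u').

Inductive right_closure (r : term -> term -> Prop) : term -> term -> Prop :=
| rc_root : forall t u, r t u -> right_closure r t u
| rc_appr : forall t u u', right_closure r u u' -> right_closure r (App t u) (App t u')
| rc_appl : forall t t' v, is_value v -> right_closure r t t' ->
    right_closure r (App t v) (App t' v).

Inductive calculus : Type :=
| CBN
| CBV_weak
| CBV_left
| CBV_right.

Definition root_rule (c : calculus) : term -> term -> Prop :=
  match c with CBN => beta_rule | _ => betav_rule end.

Definition full_red (c : calculus) : term -> term -> Prop :=
  ctx_closure (root_rule c).

Definition surface_red (c : calculus) : term -> term -> Prop :=
  match c with
  | CBN => head_closure beta_rule
  | CBV_weak => weak_closure betav_rule
  | CBV_left => left_closure betav_rule
  | CBV_right => right_closure betav_rule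
  end.

Definition normal (r : term -> term -> Prop) (t : term) : Prop :=
  forall u, ~ r t u.

Inductive unbiased (c : calculus) : term -> term -> Prop :=
| u_surf : forall t u, surface_red c t u -> unbiased c t u
| u_lam : forall P P', normal (surface_red c) (Lam P) ->
    unbiased c P P' -> unbiased c (Lam P) (Lam P')
| u_appl : forall P P' Q, normal (surface_red c) (App P Q) ->
    unbiased c P P' -> unbiased c (App P Q) (App P' Q)
| u_appr : forall P Q Q', normal (surface_red c) (App P Q) ->
    unbiased c Q Q' -> unbiased c (App P Q) (App P Q')
| u_op : forall o l1 P P' l2, normal (surface_red c) (Op o (l1 ++ P :: l2)) ->
    unbiased c P P' -> unbiased c (Op o (l1 ++ P :: l2)) (Op o (l1 ++ P' :: l2)).

(* S is a normalizing strategy for R on the set of terms [carrier]: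
   S included in R; same normal forms; and from every term having an
   R-normal form, every maximal S-sequence (infinite, or finite ending in an
   S-normal form) ends in an R-normal form -- i.e. there is no infinite
   S-sequence and every finite one reaching an S-normal form ends in an
   R-normal form. *)
Definition normalizing_strategy (carrier : term -> Prop)
  (R Str : term -> term -> Prop) : Prop :=
  (forall t u, Str t u -> R t u) /\
  (forall t, carrier t -> (normal Str t <-> normal R t)) /\
  (forall t, carrier t ->
     (exists u, clos_refl_trans term R t u /\ normal R u) ->
     (~ exists f : nat -> term, f 0 = t /\ forall n, Str (f n) (f (S n))) /\
     (forall u, clos_refl_trans term Str t u -> normal Str u -> normal R u)).

End Terms.

Arguments Var {O}.
Arguments Lam {O}.
Arguments App {O}.
Arguments Op {O}.

From Pilot Require Import Defs.
From Stdlib Require Import Arith List Relations Lia Classical_Prop.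
Import ListNotations.
Set Implicit Arguments.

(* Write ->s for the surface reduction and =>i for internal parallel reduction,
   the parallel reduction that contracts no redex in surface position.
   (1) Factorization: t ->* n implies t ->s* m =>i* n for some m.
   (2) Persistence: =>i preserves the existence of a surface redex; so if n is
       normal, m is surface normal, and m has the same root constructor as n
       with each immediate subterm reducing to the corresponding subterm of n.
   (3) ->s has the diamond property, so every maximal ->s-sequence from t ends
       in m, after as many steps as the given one.
   By induction on n, the immediate subterms of m are strongly normalizing for
   ~>_U; since ~>_U acts on a surface normal term only inside these subterms and
   keeps it surface normal, m is, and by (3) so is t.  Normal forms of ~>_U and
   -> coincide because any ->-step gives rise to some ~>_U-step. *)

Lemma star_map {A B : Type} {R : relation A} {R' : relation B} (f : A -> B) :
  (forall x y, R x y -> R' (f x) (f y)) ->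
  forall x y, clos_refl_trans A R x y -> clos_refl_trans B R' (f x) (f y).
Proof. intros Hf x y; induction 1; eauto using rt_step, rt_refl, rt_trans. Qed.

Lemma Forall2_reflexive {A : Type} (R : relation A) l : reflexive A R -> Forall2 R l l.
Proof. intros HR; induction l; constructor; auto. Qed.

Lemma Forall2_transitive {A : Type} (R : relation A) l1 l2 l3 :
  transitive A R -> Forall2 R l1 l2 -> Forall2 R l2 l3 -> Forall2 R l1 l3.
Proof.
  intros HR H; revert l3; induction H; intros l3 H'; inversion H'; subst; constructor; eauto.
Qed.

Lemma Forall2_Forall_l {A : Type} {R : relation A} {P : A -> Prop} l l' :
  Forall2 R l l' -> (forall x y, In y l' -> R x y -> P x) -> Forall P l.
Proof. induction 1; constructor; eauto using in_eq, in_cons. Qed.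

Definition list_step {A : Type} (R : relation A) (l l' : list A) : Prop :=
  exists l1 x x' l2, l = l1 ++ x :: l2 /\ l' = l1 ++ x' :: l2 /\ R x x'.

Lemma Acc_list_step {A : Type} (R : relation A) l :
  Forall (Acc (transp A R)) l -> Acc (transp (list A) (list_step R)) l.
Proof.
  induction 1 as [|x l Hx _ IHl].
  - constructor; intros y (l1 & x & x' & l2 & E & _); destruct l1; discriminate.
  - revert l IHl; induction Hx as [x _ IHx]; intros l Hl.
    induction Hl as [l Hl IHl]; constructor; intros y (l1 & z & z' & l2 & E & -> & Hz).
    destruct l1 as [|w l1]; cbn in E; injection E as <- ->.
    + apply IHx; [exact Hz|constructor; exact Hl].
    + apply IHl; exists l1, z, z', l2; auto.
Qed.

Inductive nsteps {A : Type} (R : relation A) : nat -> A -> A -> Prop :=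
| nsteps_0 t : nsteps R 0 t t
| nsteps_S k t u v : R t u -> nsteps R k u v -> nsteps R (S k) t v.

Lemma star_nsteps {A : Type} (R : relation A) t u :
  clos_refl_trans A R t u -> exists k, nsteps R k t u.
Proof.
  intros H; apply clos_rt_rt1n in H.
  induction H as [|t u v Htu _ (k & Hk)]; [exists 0|exists (S k)]; econstructor; eassumption.
Qed.

Lemma Acc_no_infinite_chain {A : Type} (R : relation A) t : Acc (transp A R) t ->
  ~ exists f : nat -> A, f 0 = t /\ forall n, R (f n) (f (S n)).
Proof.
  intros HA (f & Hf0 & Hf).
  enough (H : forall x, Acc (transp A R) x -> forall k, f k <> x) by exact (H t HA 0 Hf0).
  intros x Hx; induction Hx as [x _ IH]; intros k Hk.
  apply (IH (f (S k))) with (S k); [rewrite <- Hk; apply Hf|reflexivity].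
Qed.

Section Unbiased.
Variable O : Type.
Local Notation tm := (term O).
Local Notation lift := (Defs.lift O).
Local Notation subst := (Defs.subst O).
Local Notation is_value := (Defs.is_value O).
Local Notation normal := (Defs.normal O).
Local Notation star := (clos_refl_trans tm).

(** * De Bruijn substitution *)

Fixpoint term_nested_ind (P : tm -> Prop)
  (HVar : forall n, P (Var n)) (HLam : forall t, P t -> P (Lam t))
  (HApp : forall t u, P t -> P u -> P (App t u))
  (HOp : forall o l, Forall P l -> P (Op o l)) (t : tm) : P t :=
  let IH := @term_nested_ind P HVar HLam HApp HOp in
  match t with
  | Var n => HVar n
  | Lam b => HLam b (IH b)
  | App a b => HApp a b (IH a) (IH b)
  | Op o l => HOp o l ((fix all l : Forall P l :=
      match l with [] => Forall_nil P | x :: l' => Forall_cons x (IH x) (all l') end) l)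
  end.

Ltac simpl_ops := cbn [Defs.lift Defs.subst map].

Ltac index_cases := repeat (simpl_ops; match goal with
  | |- context [?a <? ?b] => destruct (Nat.ltb_spec a b)
  | |- context [?a =? ?b] => destruct (Nat.eqb_spec a b)
  end); simpl_ops; try (f_equal; lia); try lia; try reflexivity.

Ltac map_congr := f_equal; rewrite ?map_map; apply map_ext_Forall;
  eapply Forall_impl; [|eassumption]; cbn; intros; eauto.

Lemma lift_lift t i k : i <= k -> lift i (lift k t) = lift (S k) (lift i t).
Proof.
  revert i k; induction t using term_nested_ind; intros i k Hik; simpl_ops.
  - index_cases.
  - rewrite IHt by lia; reflexivity.
  - f_equal; auto.
  - map_congr.
Qed.

Lemma lift_subst_above t N j k : j <= k ->
  lift k (subst j N t) = subst j (lift k N) (lift (S k) t).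
Proof.
  revert N j k; induction t using term_nested_ind; intros N j k Hjk; simpl_ops.
  - index_cases.
  - rewrite IHt, (@lift_lift N 0 k) by lia; reflexivity.
  - f_equal; auto.
  - map_congr.
Qed.

Lemma lift_subst_below t N j k : k <= j ->
  lift k (subst j N t) = subst (S j) (lift k N) (lift k t).
Proof.
  revert N j k; induction t using term_nested_ind; intros N j k Hkj; simpl_ops.
  - index_cases.
  - rewrite IHt, (@lift_lift N 0 k) by lia; reflexivity.
  - f_equal; auto.
  - map_congr.
Qed.

Lemma subst_lift t N k : subst k N (lift k t) = t.
Proof.
  revert N k; induction t using term_nested_ind; intros N k; simpl_ops.
  - index_cases.
  - rewrite IHt; reflexivity.
  - f_equal; auto.
  - f_equal; rewrite map_map; rewrite <- (map_id l) at 2; apply map_ext_Forall.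
    eapply Forall_impl; [|eassumption]; cbn; auto.
Qed.

Lemma subst_subst t M N i j : i <= j ->
  subst j N (subst i M t) = subst i (subst j N M) (subst (S j) (lift i N) t).
Proof.
  revert M N i j; induction t using term_nested_ind; intros M N i j Hij; simpl_ops.
  - index_cases. rewrite subst_lift; reflexivity.
  - rewrite IHt, lift_subst_below, (@lift_lift N 0 i) by lia; reflexivity.
  - f_equal; auto.
  - map_congr.
Qed.

Lemma is_value_lift k t : is_value (lift k t) <-> is_value t.
Proof. destruct t; simpl_ops; try tauto. destruct (n <? k); cbn; tauto. Qed.

Lemma is_value_subst k N t : is_value N -> is_value t -> is_value (subst k N t).
Proof.
  intros HN Ht; destruct t; simpl_ops; try exact Ht.
  destruct (n <? k); [exact I|]. destruct (n =? k); [exact HN|exact I].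
Qed.

Lemma is_value_subst_inv k N t : is_value (subst k N t) -> is_value t.
Proof. destruct t; cbn; tauto. Qed.

(** * Surface reduction *)

Variable c : calculus.
Local Notation full := (full_red O c).

(* In [App t u], [t] is in surface position iff [fun_surface u] and [u] iff
   [arg_surface t]; the body of an abstraction is in surface position iff
   [c = CBN]. *)
Definition beta_arg (a : tm) : Prop := c <> CBN -> is_value a.
Definition fun_surface (u : tm) : Prop := c = CBV_right -> is_value u.
Definition arg_surface (t : tm) : Prop := c <> CBN /\ (c = CBV_left -> is_value t).

Inductive redex : tm -> tm -> Prop :=
| redex_beta B a : beta_arg a -> redex (App (Lam B) a) (subst 0 a B).

Inductive sred : tm -> tm -> Prop :=
| sred_redex t u : redex t u -> sred t u
| sred_lam t t' : c = CBN -> sred t t' -> sred (Lam t) (Lam t')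
| sred_appl t t' u : fun_surface u -> sred t t' -> sred (App t u) (App t' u)
| sred_appr t u u' : arg_surface t -> sred u u' -> sred (App t u) (App t u').

Lemma root_rule_redex t u : root_rule O c t u <-> redex t u.
Proof.
  split.
  - destruct c eqn:Ec; cbn; intros []; constructor; intros Hc; congruence || assumption.
  - intros [B a Ha]; destruct c eqn:Ec; cbn; constructor; apply Ha; congruence.
Qed.

Lemma surface_red_sred t u : surface_red O c t u <-> sred t u.
Proof.
  unfold fun_surface, arg_surface.
  split.
  - destruct c eqn:Ec; cbn; induction 1;
      first [apply sred_redex, root_rule_redex; rewrite Ec; assumption
            | apply sred_lam | apply sred_appl | apply sred_appr];
      auto; (split || intros); congruence || auto.
  - induction 1 as [t u Hr|t t' Hc _ IH|t t' u Hu _ IH|t u u' [Hc Hv] _ IH];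
      [apply root_rule_redex in Hr|..]; destruct c eqn:Ec; cbn in *;
      try congruence;
      first [constructor 1; assumption | constructor 2; solve [auto]
            | constructor 3; solve [auto]].
Qed.

Lemma normal_surface_red t : normal (surface_red O c) t <-> normal sred t.
Proof.
  split; intros Hn u Hu; apply (Hn u), surface_red_sred; assumption.
Qed.

Lemma beta_arg_lift k a : beta_arg (lift k a) <-> beta_arg a.
Proof. unfold beta_arg; rewrite is_value_lift; reflexivity. Qed.

Lemma fun_surface_lift k u : fun_surface (lift k u) <-> fun_surface u.
Proof. unfold fun_surface; rewrite is_value_lift; reflexivity. Qed.

Lemma arg_surface_lift k t : arg_surface (lift k t) <-> arg_surface t.
Proof. unfold arg_surface; rewrite is_value_lift; reflexivity. Qed.

Lemma beta_arg_subst k N a : beta_arg N -> beta_arg a -> beta_arg (subst k N a).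
Proof. intros HN Ha Hc; apply is_value_subst; auto. Qed.

Lemma fun_surface_subst k N u : beta_arg N -> fun_surface u -> fun_surface (subst k N u).
Proof. intros HN Hu Hc; apply is_value_subst; auto; apply HN; congruence. Qed.

Lemma arg_surface_subst k N t : beta_arg N -> arg_surface t -> arg_surface (subst k N t).
Proof. intros HN [Hc Ht]; split; auto; intros; apply is_value_subst; auto. Qed.

Lemma redex_lift k t u : redex t u -> redex (lift k t) (lift k u).
Proof.
  intros [B a Ha]; simpl_ops; rewrite lift_subst_above by lia.
  constructor; apply beta_arg_lift; assumption.
Qed.

Lemma redex_subst k N t u : beta_arg N -> redex t u -> redex (subst k N t) (subst k N u).
Proof.
  intros HN [B a Ha]; simpl_ops; rewrite subst_subst by lia.
  constructor; apply beta_arg_subst; assumption.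
Qed.

Lemma sred_lift k t u : sred t u -> sred (lift k t) (lift k u).
Proof.
  intros H; revert k; induction H; intros k; simpl_ops.
  - apply sred_redex, redex_lift; assumption.
  - apply sred_lam; auto.
  - apply sred_appl; [apply fun_surface_lift|]; auto.
  - apply sred_appr; [apply arg_surface_lift|]; auto.
Qed.

Lemma sred_subst k N t u : beta_arg N -> sred t u -> sred (subst k N t) (subst k N u).
Proof.
  intros HN H; revert k N HN; induction H; intros k N HN; simpl_ops.
  - apply sred_redex, redex_subst; assumption.
  - apply sred_lam; auto; apply IHsred, beta_arg_lift; assumption.
  - apply sred_appl; [apply fun_surface_subst|]; auto.
  - apply sred_appr; [apply arg_surface_subst|]; auto.
Qed.

Lemma sred_value t u : sred t u -> is_value t -> c = CBN.
Proof. destruct 1 as [t u []| | |]; cbn; tauto. Qed.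

Lemma fun_surface_sred u u' : sred u u' -> fun_surface u -> fun_surface u'.
Proof. intros Hs Hu Hc; pose proof (sred_value Hs (Hu Hc)); congruence. Qed.

Lemma arg_surface_sred t t' : sred t t' -> arg_surface t -> arg_surface t'.
Proof.
  intros Hs [Hc Ht]; split; auto.
  intros Hl; destruct Hc; apply (sred_value Hs (Ht Hl)).
Qed.

Definition joinable (a b : tm) : Prop := a = b \/ exists d, sred a d /\ sred b d.

Lemma joinable_sym a b : joinable a b -> joinable b a.
Proof. intros [->|(d & Ha & Hb)]; [left|right; exists d]; auto. Qed.

Lemma joinable_map (f : tm -> tm) a b : (forall x y, sred x y -> sred (f x) (f y)) ->
  joinable a b -> joinable (f a) (f b).
Proof. intros Hf [->|(d & Ha & Hb)]; [left|right; exists (f d)]; auto. Qed.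

Lemma redex_sred_joinable t a b : redex t a -> sred t b -> joinable a b.
Proof.
  intros [B v Hv] Hb.
  inversion Hb as [? ? Hr|?|? t' ? Hu HB|? ? v' Ha Hs]; subst.
  - inversion Hr; subst; left; reflexivity.
  - inversion HB as [? ? Hr|? B' Hc HBB'| |]; subst; [inversion Hr|].
    right; exists (subst 0 v B'); split.
    + apply sred_subst; assumption.
    + apply sred_redex; constructor; assumption.
  - destruct Ha as [Hc _]; exfalso; apply Hc, (sred_value Hs (Hv Hc)).
Qed.

Lemma sred_diamond t a b : sred t a -> sred t b -> joinable a b.
Proof.
  intros Ha; revert b.
  induction Ha as [t a Ha|t t' Hc Ht IH|t t' u Hu Ht IH|t u u' Ht Hu IH]; intros b Hb;
    [apply (redex_sred_joinable Ha Hb)|..];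
    inversion Hb as [? ? Hr|? t'' ? Ht''|? t'' ? Hu' Ht''|? ? u'' Ht' Hu'']; subst;
    try (apply joinable_sym, (redex_sred_joinable Hr);
         first [apply sred_lam | apply sred_appl | apply sred_appr]; assumption).
  - apply (joinable_map Lam); auto. intros; apply sred_lam; assumption.
  - apply (joinable_map (fun x => App x u)); auto. intros; apply sred_appl; assumption.
  - right; exists (App t' u''); split.
    + apply sred_appr; [apply (arg_surface_sred Ht)|]; assumption.
    + apply sred_appl; [apply (fun_surface_sred Hu'')|]; assumption.
  - right; exists (App t'' u'); split.
    + apply sred_appl; [apply (fun_surface_sred Hu)|]; assumption.
    + apply sred_appr; [apply (arg_surface_sred Ht'')|]; assumption.
  - apply (joinable_map (fun x => App t x)); auto. intros; apply sred_appr; assumption.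
Qed.

Lemma sred_full t u : sred t u -> full t u.
Proof.
  induction 1 as [t u Hr| | |].
  - apply cc_root, root_rule_redex, Hr.
  - apply cc_lam; assumption.
  - apply cc_appl; assumption.
  - apply cc_appr; assumption.
Qed.

(** * Parallel and internal parallel reduction *)

Inductive par : tm -> tm -> Prop :=
| par_var n : par (Var n) (Var n)
| par_lam t t' : par t t' -> par (Lam t) (Lam t')
| par_app t t' u u' : par t t' -> par u u' -> par (App t u) (App t' u')
| par_op o l l' : par_list l l' -> par (Op o l) (Op o l')
| par_beta t t' u u' : beta_arg u -> par t t' -> par u u' ->
    par (App (Lam t) u) (subst 0 u' t')
with par_list : list tm -> list tm -> Prop :=
| par_nil : par_list [] []
| par_cons t t' l l' : par t t' -> par_list l l' -> par_list (t :: l) (t' :: l').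

Scheme par_mut := Minimality for par Sort Prop
with par_list_mut := Minimality for par_list Sort Prop.
Combined Scheme par_par_list_ind from par_mut, par_list_mut.

Lemma par_refl t : par t t.
Proof.
  induction t as [n|t IH|t u IHt IHu|o l IH] using term_nested_ind; constructor; auto.
  induction IH; constructor; auto.
Qed.

Lemma par_list_refl l : par_list l l.
Proof. induction l; constructor; auto using par_refl. Qed.

Lemma par_list_app l1 l1' l2 l2' :
  par_list l1 l1' -> par_list l2 l2' -> par_list (l1 ++ l2) (l1' ++ l2').
Proof. induction 1; cbn; auto using par_cons. Qed.

Lemma par_list_Forall2 l l' : par_list l l' -> Forall2 par l l'.
Proof. induction 1; constructor; assumption. Qed.

Lemma beta_arg_par a a' : par a a' -> beta_arg a -> beta_arg a'.
Proof. intros Hp Ha Hc; specialize (Ha Hc); destruct Hp; cbn in *; tauto. Qed.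

Lemma full_par t u : full t u -> par t u.
Proof.
  induction 1 as [t u Hr| | | |].
  - apply root_rule_redex in Hr as [B a Ha]; constructor; auto using par_refl.
  - constructor; assumption.
  - constructor; auto using par_refl.
  - constructor; auto using par_refl.
  - constructor; apply par_list_app; [apply par_list_refl|constructor; auto using par_list_refl].
Qed.

Lemma star_full_lam t t' : star full t t' -> star full (Lam t) (Lam t').
Proof. apply (star_map (R := full) Lam); intros; apply cc_lam; assumption. Qed.

Lemma star_full_app t t' u u' : star full t t' -> star full u u' ->
  star full (App t u) (App t' u').
Proof.
  intros Ht Hu; eapply rt_trans.
  - apply (star_map (R := full) (fun x => App x u)); [intros; apply cc_appl|]; eassumption.
  - apply (star_map (R := full) (App t')); [intros; apply cc_appr|]; assumption.
Qed.

Lemma star_full_op o l1 l2 t t' : star full t t' ->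
  star full (Op o (l1 ++ t :: l2)) (Op o (l1 ++ t' :: l2)).
Proof.
  apply (star_map (R := full) (fun x => Op o (l1 ++ x :: l2))); intros; apply cc_op; assumption.
Qed.

Lemma par_full_mut : (forall t u, par t u -> star full t u) /\
  (forall l l', par_list l l' ->
     forall o pre, star full (Op o (pre ++ l)) (Op o (pre ++ l'))).
Proof.
  apply par_par_list_ind.
  - intros; apply rt_refl.
  - intros; apply star_full_lam; assumption.
  - intros; apply star_full_app; assumption.
  - intros o l l' _ IH; apply (IH o []).
  - intros t t' u u' Hu _ IHt Hpu IHu.
    eapply rt_trans; [apply star_full_app; [apply star_full_lam|]; eassumption|].
    apply rt_step, cc_root, root_rule_redex; constructor; apply (beta_arg_par Hpu Hu).
  - intros; apply rt_refl.
  - intros t t' l l' _ IHt _ IHl o pre.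
    eapply rt_trans; [apply star_full_op, IHt|].
    specialize (IHl o (pre ++ [t'])); rewrite <- !app_assoc in IHl; exact IHl.
Qed.

Lemma par_full t u : par t u -> star full t u.
Proof. intros; apply par_full_mut; assumption. Qed.

Lemma par_lift_mut :
  (forall t u, par t u -> forall k, par (lift k t) (lift k u)) /\
  (forall l l', par_list l l' -> forall k, par_list (map (lift k) l) (map (lift k) l')).
Proof.
  apply par_par_list_ind; intros; simpl_ops; try (constructor; auto; fail).
  - apply par_refl.
  - rewrite lift_subst_above by lia. constructor; auto. apply beta_arg_lift; assumption.
Qed.

Lemma par_lift k t u : par t u -> par (lift k t) (lift k u).
Proof. intros; apply par_lift_mut; assumption. Qed.

Lemma par_subst_mut :
  (forall t u, par t u -> forall k N N', beta_arg N -> par N N' ->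
     par (subst k N t) (subst k N' u)) /\
  (forall l l', par_list l l' -> forall k N N', beta_arg N -> par N N' ->
     par_list (map (subst k N) l) (map (subst k N') l')).
Proof.
  apply par_par_list_ind; simpl_ops.
  - intros n k N N' _ HNN'; index_cases; assumption || constructor.
  - intros t t' _ IH k N N' HN HNN'.
    constructor; apply IH; [apply beta_arg_lift|apply par_lift]; assumption.
  - intros t t' u u' _ IHt _ IHu k N N' HN HNN'; constructor; auto.
  - intros o l l' _ IH k N N' HN HNN'; constructor; auto.
  - intros t t' u u' Hu _ IHt _ IHu k N N' HN HNN'.
    rewrite subst_subst by lia. constructor; auto using beta_arg_subst.
    apply IHt; [apply beta_arg_lift|apply par_lift]; assumption.
  - intros; constructor.
  - intros t t' l l' _ IHt _ IHl k N N' HN HNN'; constructor; auto.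
Qed.

Lemma par_subst k N N' t u :
  beta_arg N -> par N N' -> par t u -> par (subst k N t) (subst k N' u).
Proof. intros; apply par_subst_mut; assumption. Qed.

Lemma par_list_subst k N N' l l' : beta_arg N -> par N N' -> par_list l l' ->
  par_list (map (subst k N) l) (map (subst k N') l').
Proof. intros; apply par_subst_mut; assumption. Qed.

Inductive ipar : tm -> tm -> Prop :=
| ipar_var n : ipar (Var n) (Var n)
| ipar_lam t t' : par t t' -> (c = CBN -> ipar t t') -> ipar (Lam t) (Lam t')
| ipar_app t t' u u' : par t t' -> par u u' ->
    (fun_surface u -> ipar t t') -> (arg_surface t -> ipar u u') ->
    ipar (App t u) (App t' u')
| ipar_op o l l' : par_list l l' -> ipar (Op o l) (Op o l').

Lemma ipar_par t u : ipar t u -> par t u.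
Proof. destruct 1; constructor; assumption. Qed.

Lemma ipar_value t u : ipar t u -> (is_value t <-> is_value u).
Proof. destruct 1; cbn; tauto. Qed.

Lemma ipar_fun_surface t t' u u' :
  ipar (App t u) (App t' u') -> (fun_surface u <-> fun_surface u').
Proof.
  inversion 1 as [| |? ? ? ? _ _ _ Harg|]; subst; unfold fun_surface.
  assert (Hu : c = CBV_right -> ipar u u') by (intros Hc; apply Harg; split; [|intro]; congruence).
  split; intros Hv Hc; apply (ipar_value (Hu Hc)); auto.
Qed.

Lemma ipar_arg_surface t t' u u' :
  ipar (App t u) (App t' u') -> (arg_surface t <-> arg_surface t').
Proof.
  inversion 1 as [| |? ? ? ? _ _ Hfun _|]; subst; unfold arg_surface.
  assert (Ht : c = CBV_left -> ipar t t') by (intros Hc; apply Hfun; intro; congruence).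
  split; intros [Hn Hv]; split; auto; intros Hc; apply (ipar_value (Ht Hc)); auto.
Qed.

Lemma ipar_lift k t u : ipar t u -> ipar (lift k t) (lift k u).
Proof.
  intros H; revert k; induction H; intros k; simpl_ops.
  - destruct (n <? k); constructor.
  - constructor; auto using par_lift.
  - constructor; auto using par_lift;
      [rewrite fun_surface_lift | rewrite arg_surface_lift]; auto.
  - constructor; apply par_lift_mut; assumption.
Qed.

Lemma ipar_subst k N N' t u : beta_arg N -> ipar N N' -> ipar t u ->
  ipar (subst k N t) (subst k N' u).
Proof.
  intros HN HNN' H; revert k N N' HN HNN'.
  induction H as [n|t t' Hp _ IH|t t' u u' Hpt Hpu _ IHt _ IHu|o l l' Hl];
    intros k N N' HN HNN'; simpl_ops; pose proof (ipar_par HNN').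
  - index_cases; assumption || constructor.
  - constructor.
    + apply par_subst; [apply beta_arg_lift | apply par_lift | ]; assumption.
    + intros Hc; apply IH; [| apply beta_arg_lift | apply ipar_lift]; assumption.
  - constructor; try (apply par_subst; assumption).
    + intros Hu; apply IHt; auto. intros Hc; eapply is_value_subst_inv, (Hu Hc).
    + intros [Hc Ht]; apply IHu; auto.
      split; auto; intros Hl; eapply is_value_subst_inv, (Ht Hl).
  - constructor; apply par_list_subst; assumption.
Qed.

Lemma value_par_ipar t t' : c <> CBN -> is_value t -> par t t' -> ipar t t'.
Proof. intros Hc Ht; destruct 1; cbn in Ht; try tauto; constructor; auto; congruence. Qed.

(** * Factorization and persistence *)

Lemma star_sred_lam t u : c = CBN -> star sred t u -> star sred (Lam t) (Lam u).
Proof. intros Hc; apply star_map; intros; apply sred_lam; assumption. Qed.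

Lemma star_sred_appl t t' u : fun_surface u -> star sred t t' ->
  star sred (App t u) (App t' u).
Proof. intros Hu; apply (star_map (fun x => App x u)); intros; apply sred_appl; assumption. Qed.

Lemma star_sred_appr t u u' : arg_surface t -> star sred u u' ->
  star sred (App t u) (App t u').
Proof. intros Ht; apply star_map; intros; apply sred_appr; assumption. Qed.

Lemma star_sred_lift k t u : star sred t u -> star sred (lift k t) (lift k u).
Proof. apply star_map; intros; apply sred_lift; assumption. Qed.

Lemma star_sred_subst k N t u : beta_arg N -> star sred t u ->
  star sred (subst k N t) (subst k N u).
Proof. intros HN; apply star_map; intros; apply sred_subst; assumption. Qed.

(* Under CBN the substituted argument may land in surface position, so its own
   surface steps have to be performed first. *)
Lemma subst_split_cbn k m t' u u' m2 : c = CBN -> ipar m t' -> par u u' ->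
  star sred u m2 -> ipar m2 u' -> exists r, star sred (subst k u m) r /\ ipar r (subst k u' t').
Proof.
  intros Hc H; revert k u u' m2.
  assert (Hb : forall a, beta_arg a) by (intros a Hn; contradiction).
  induction H as [n|t t' _ _ IH|t t' v v' _ Hpv _ IHt _ _|o l l' Hl];
    intros k u u' m2 Hu Hum2 Hm2; simpl_ops.
  - index_cases; [exists (Var n) | exists m2 | exists (Var (pred n))];
      split; (assumption || apply rt_refl || constructor).
  - destruct (IH Hc (S k) (lift 0 u) (lift 0 u') (lift 0 m2)) as (r & Hr & Hrt);
      [apply par_lift | apply star_sred_lift | apply ipar_lift | ]; try assumption.
    exists (Lam r); split; [apply star_sred_lam; assumption|].
    constructor; [apply ipar_par|intros]; assumption.
  - assert (Hf : forall a, fun_surface a) by (intros a Hr; congruence).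
    destruct (IHt (Hf v) k u u' m2 Hu Hum2 Hm2) as (r & Hr & Hrt).
    exists (App r (subst k u v)); split; [apply star_sred_appl; auto|].
    constructor; auto using ipar_par, par_subst.
    intros [Hn _]; contradiction.
  - exists (Op o (map (subst k u) l)); split; [apply rt_refl|].
    constructor; apply par_list_subst; auto.
Qed.

Lemma par_split_app t t' u u' m1 m2 : par t t' -> par u u' ->
  star sred t m1 -> ipar m1 t' -> star sred u m2 -> ipar m2 u' ->
  exists m, star sred (App t u) m /\ ipar m (App t' u').
Proof.
  intros Htt' Huu' Htm1 Hm1 Hum2 Hm2.
  destruct (classic (arg_surface t)) as [Ha|Ha].
  - assert (Hstep : star sred (App t u) (App t m2)) by (apply star_sred_appr; assumption).
    destruct (classic (fun_surface m2)) as [Hf|Hf].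
    + exists (App m1 m2); split; [eapply rt_trans; [exact Hstep|]|].
      * apply star_sred_appl; assumption.
      * constructor; auto using ipar_par.
    + exists (App t m2); split; [exact Hstep|].
      constructor; auto using ipar_par; intros; contradiction.
  - assert (Hf : fun_surface u).
    { intros Hc; exfalso; apply Ha; split; [|intro]; congruence. }
    assert (Hstep : star sred (App t u) (App m1 u)) by (apply star_sred_appl; assumption).
    destruct (classic (arg_surface m1)) as [Ha1|Ha1].
    + exists (App m1 m2); split; [eapply rt_trans; [exact Hstep|]|].
      * apply star_sred_appr; assumption.
      * constructor; auto using ipar_par.
    + exists (App m1 u); split; [exact Hstep|].
      constructor; auto using ipar_par; intros; contradiction.
Qed.

Lemma par_split_beta t t' u u' m m2 : beta_arg u -> par u u' ->
  star sred t m -> ipar m t' -> star sred u m2 -> ipar m2 u' ->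
  exists r, star sred (App (Lam t) u) r /\ ipar r (subst 0 u' t').
Proof.
  intros Hu Huu' Htm Hm Hum2 Hm2.
  assert (Hstep : star sred (App (Lam t) u) (subst 0 u m)).
  { eapply rt_trans; [apply rt_step, sred_redex; constructor; exact Hu|].
    apply star_sred_subst; assumption. }
  destruct (classic (c = CBN)) as [Hc|Hc].
  - destruct (subst_split_cbn 0 Hc Hm Huu' Hum2 Hm2) as (r & Hr & Hrt).
    exists r; split; [eapply rt_trans|]; eassumption.
  - exists (subst 0 u m); split; [assumption|].
    apply ipar_subst; auto. apply value_par_ipar; auto.
Qed.

Lemma par_split t u : par t u -> exists m, star sred t m /\ ipar m u.
Proof.
  induction 1 as [n|t t' Htt' IH|t t' u u' Htt' (m1 & ? & ?) Huu' (m2 & ? & ?)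
                 |o l l' Hl|t t' u u' Hu Htt' (m & ? & ?) Huu' (m2 & ? & ?)].
  - exists (Var n); split; [apply rt_refl|constructor].
  - destruct (classic (c = CBN)) as [Hc|Hc].
    + destruct IH as (m & Htm & Hm).
      exists (Lam m); split; [apply star_sred_lam; assumption|].
      constructor; [apply ipar_par|intros]; assumption.
    + exists (Lam t); split; [apply rt_refl|].
      constructor; [assumption|intros; contradiction].
  - eapply par_split_app; eassumption.
  - exists (Op o l); split; [apply rt_refl|constructor; assumption].
  - eapply par_split_beta; eassumption.
Qed.

Lemma ipar_sred_merge t u v : ipar t u -> sred u v -> exists w, star sred t w /\ par w v.
Proof.
  intros Hp Hs; revert t Hp.
  induction Hs as [u v [B' a' Ha']|u u' Hc _ IH|u u' w Hw _ IH|w u u' Hw _ IH];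
    intros t Hp.
  - inversion Hp as [| |t1 ? t2 ? _ Hp2 Hfun Harg|]; subst.
    assert (Ht1 : ipar t1 (Lam B')).
    { apply Hfun, (ipar_fun_surface Hp). intros Hc; apply Ha'; congruence. }
    inversion Ht1 as [|B ? HB _| |]; subst.
    assert (Ht2 : beta_arg t2).
    { intros Hc. assert (Ha : arg_surface (Lam B)) by (split; [|intros]; cbn; auto).
      apply (ipar_value (Harg Ha)), Ha', Hc. }
    exists (subst 0 t2 B); split.
    + apply rt_step, sred_redex; constructor; assumption.
    + apply par_subst; assumption.
  - inversion Hp as [|t0 ? _ Hi| |]; subst.
    destruct (IH t0 (Hi Hc)) as (w & Hw & Hwp).
    exists (Lam w); split; [apply star_sred_lam|constructor]; assumption.
  - inversion Hp as [| |t1 ? t2 ? _ Hp2 Hfun _|]; subst.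
    assert (Hf : fun_surface t2) by (apply (ipar_fun_surface Hp); assumption).
    destruct (IH t1 (Hfun Hf)) as (w' & Hw' & Hwp).
    exists (App w' t2); split; [apply star_sred_appl|constructor]; assumption.
  - inversion Hp as [| |t1 ? t2 ? Hp1 _ _ Harg|]; subst.
    assert (Ha : arg_surface t1) by (apply (ipar_arg_surface Hp); assumption).
    destruct (IH t2 (Harg Ha)) as (w' & Hw' & Hwp).
    exists (App t1 w'); split; [apply star_sred_appr|constructor]; assumption.
Qed.

Lemma star_sred_ipar_postpone u v : star sred u v ->
  forall t, ipar t u -> exists m, star sred t m /\ ipar m v.
Proof.
  induction 1 as [u v Huv|u|u w v _ IH1 _ IH2]; intros t Ht.
  - destruct (ipar_sred_merge Ht Huv) as (w & Htw & Hwv).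
    destruct (par_split Hwv) as (m & Hwm & Hmv).
    exists m; split; [eapply rt_trans|]; eassumption.
  - exists t; split; [apply rt_refl|assumption].
  - destruct (IH1 t Ht) as (m1 & Htm1 & Hm1).
    destruct (IH2 m1 Hm1) as (m & Hm1m & Hm).
    exists m; split; [eapply rt_trans|]; eassumption.
Qed.

Lemma star_ipar_postpone t u : star ipar t u ->
  forall v, star sred u v -> exists m, star sred t m /\ star ipar m v.
Proof.
  induction 1 as [t u Htu|t|t w u _ IH1 _ IH2]; intros v Huv.
  - destruct (star_sred_ipar_postpone Huv Htu) as (m & Htm & Hmv).
    exists m; split; [|apply rt_step]; assumption.
  - exists v; split; [assumption|apply rt_refl].
  - destruct (IH2 v Huv) as (m1 & Hwm1 & Hm1v).
    destruct (IH1 m1 Hwm1) as (m & Htm & Hmm1).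
    exists m; split; [|eapply rt_trans]; eassumption.
Qed.

Lemma full_factorization t n : star full t n -> exists m, star sred t m /\ star ipar m n.
Proof.
  induction 1 as [t u Htu|t|t u n _ IH1 _ IH2].
  - destruct (par_split (full_par Htu)) as (m & Htm & Hmu).
    exists m; split; [|apply rt_step]; assumption.
  - exists t; split; apply rt_refl.
  - destruct IH1 as (m1 & Htm1 & Hm1u), IH2 as (m2 & Hum2 & Hm2n).
    destruct (star_ipar_postpone Hm1u Hum2) as (m & Hm1m & Hmm2).
    exists m; split; eapply rt_trans; eassumption.
Qed.

Lemma ipar_sred_persist t t' u : ipar t t' -> sred t u -> exists u', sred t' u'.
Proof.
  intros Hp Hs; revert t' Hp.
  induction Hs as [t u [B a Ha]|t u Hc _ IH|t u v Hv _ IH|t u v Ht _ IH]; intros t' Hp.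
  - inversion Hp as [| |? x ? y _ _ Hfun Harg|]; subst.
    assert (Hx : ipar (Lam B) x) by (apply Hfun; intros Hc; apply Ha; congruence).
    inversion Hx as [|? B' _ _| |]; subst.
    exists (subst 0 y B'); apply sred_redex; constructor.
    intros Hc. assert (HB : arg_surface (Lam B)) by (split; [|intros]; cbn; auto).
    apply (ipar_value (Harg HB)), Ha, Hc.
  - inversion Hp as [|? t'' _ Hi| |]; subst.
    destruct (IH t'' (Hi Hc)) as (u' & Hu').
    exists (Lam u'); apply sred_lam; assumption.
  - inversion Hp as [| |? x ? y _ _ Hfun _|]; subst.
    destruct (IH x (Hfun Hv)) as (x' & Hx').
    exists (App x' y); apply sred_appl; [apply (ipar_fun_surface Hp)|]; assumption.
  - inversion Hp as [| |? x ? y _ _ _ Harg|]; subst.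
    destruct (IH y (Harg Ht)) as (y' & Hy').
    exists (App x y'); apply sred_appr; [apply (ipar_arg_surface Hp)|]; assumption.
Qed.

Lemma star_ipar_sred_persist m n u : star ipar m n -> sred m u -> exists u', sred n u'.
Proof.
  intros Hmn; revert u.
  induction Hmn as [m n Hmn|m|m w n _ IH1 _ IH2]; intros u Hu; eauto.
  - apply (ipar_sred_persist Hmn Hu).
  - destruct (IH1 u Hu) as (u' & Hu'); eauto.
Qed.

Lemma star_ipar_normal m n : star ipar m n -> normal full n -> normal sred m.
Proof.
  intros Hmn Hn u Hu.
  destruct (star_ipar_sred_persist Hmn Hu) as (u' & Hu').
  apply (Hn u'), sred_full, Hu'.
Qed.

(** * Strong normalization of the unbiased strategy *)

Inductive root_congr (R : relation tm) : tm -> tm -> Prop :=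
| congr_var n : root_congr R (Var n) (Var n)
| congr_lam t t' : R t t' -> root_congr R (Lam t) (Lam t')
| congr_app t t' u u' : R t t' -> R u u' -> root_congr R (App t u) (App t' u')
| congr_op o l l' : Forall2 R l l' -> root_congr R (Op o l) (Op o l').

Lemma star_ipar_root_congr m n : star ipar m n -> root_congr (star full) m n.
Proof.
  induction 1 as [m n Hmn|m|m w n _ IH1 _ IH2].
  - destruct Hmn as [n|t t' Htt' _|t t' u u' Htt' Huu' _ _|o l l' Hl];
      constructor; try (apply par_full; assumption).
    eapply Forall2_impl; [apply par_full | apply par_list_Forall2; assumption].
  - destruct m; constructor; try apply rt_refl.
    apply Forall2_reflexive; intros x; apply rt_refl.
  - destruct IH1; inversion IH2; subst; constructor; try (eapply rt_trans; eassumption).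
    eapply Forall2_transitive; [|eassumption..]. intros x y z; apply rt_trans.
Qed.

Lemma normal_full_lam t : normal full (Lam t) -> normal full t.
Proof. intros Hn u Hu; apply (Hn (Lam u)), cc_lam, Hu. Qed.

Lemma normal_full_appl t u : normal full (App t u) -> normal full t.
Proof. intros Hn t' Ht; apply (Hn (App t' u)), cc_appl, Ht. Qed.

Lemma normal_full_appr t u : normal full (App t u) -> normal full u.
Proof. intros Hn u' Hu; apply (Hn (App t u')), cc_appr, Hu. Qed.

Lemma normal_full_op o l x : normal full (Op o l) -> In x l -> normal full x.
Proof.
  intros Hn Hin y Hy; apply in_split in Hin as (l1 & l2 & ->).
  apply (Hn (Op o (l1 ++ y :: l2))), cc_op, Hy.
Qed.

Lemma normal_sred_var n : normal sred (Var n).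
Proof. intros y Hy; inversion Hy as [? ? Hr| | |]; inversion Hr. Qed.

Lemma normal_sred_op o l : normal sred (Op o l).
Proof. intros y Hy; inversion Hy as [? ? Hr| | |]; inversion Hr. Qed.

Lemma normal_sred_lam t : c = CBN -> normal sred (Lam t) -> normal sred t.
Proof. intros Hc Hn u Hu; apply (Hn (Lam u)), sred_lam; assumption. Qed.

Lemma normal_sred_appl t u : fun_surface u -> normal sred (App t u) -> normal sred t.
Proof. intros Hu Hn t' Ht; apply (Hn (App t' u)), sred_appl; assumption. Qed.

Lemma normal_sred_appr t u : arg_surface t -> normal sred (App t u) -> normal sred u.
Proof. intros Ht Hn u' Hu; apply (Hn (App t u')), sred_appr; assumption. Qed.

Local Notation U := (unbiased O c).

Lemma unbiased_full t u : U t u -> full t u.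
Proof.
  induction 1 as [t u Hs| | | |].
  - apply sred_full, surface_red_sred, Hs.
  - apply cc_lam; assumption.
  - apply cc_appl; assumption.
  - apply cc_appr; assumption.
  - apply cc_op; assumption.
Qed.

Lemma unbiased_surface t u u' : sred t u -> U t u' -> sred t u'.
Proof.
  intros Hs HU; revert Hs.
  destruct HU as [t u' Hs'|? ? Hn _|? ? ? Hn _|? ? ? Hn _|? ? ? ? ? Hn _]; intros Hs;
    try (exfalso; apply (Hn u), surface_red_sred, Hs).
  apply surface_red_sred, Hs'.
Qed.

Lemma unbiased_normal_value t t' : normal sred t -> U t t' -> is_value t' -> is_value t.
Proof.
  intros Hn HU; destruct HU as [t t' Hs| | | |]; cbn; try tauto.
  exfalso; apply (Hn t'), surface_red_sred, Hs.
Qed.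

Lemma unbiased_normal_lam t B : normal sred t -> U t (Lam B) -> exists B0, t = Lam B0.
Proof.
  intros Hn HU; inversion HU as [? ? Hs|B0| | |]; subst; eauto.
  exfalso; apply (Hn (Lam B)), surface_red_sred, Hs.
Qed.

Lemma unbiased_appl_normal P P' Q : U P P' -> (normal sred P -> normal sred P') ->
  normal sred (App P Q) -> normal sred (App P' Q).
Proof.
  intros HP IH Hn y Hy.
  inversion Hy as [? ? Hr|?|? P'' ? Hf HP''|? ? Q' Ha HQ]; subst.
  - inversion Hr as [B a Ha]; subst.
    assert (HPn : normal sred P).
    { apply (normal_sred_appl (u := Q)); [intros Hc; apply Ha; congruence|exact Hn]. }
    destruct (unbiased_normal_lam HPn HP) as (B0 & ->).
    apply (Hn (subst 0 Q B0)), sred_redex; constructor; assumption.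
  - apply (IH (normal_sred_appl Hf Hn) _ HP'').
  - apply (Hn (App P Q')), sred_appr; [|assumption].
    destruct Ha as [Hc Hv]; split; [assumption|]; intros Hl.
    assert (HPn : normal sred P).
    { apply (normal_sred_appl (u := Q)); [intro; congruence|exact Hn]. }
    apply (unbiased_normal_value HPn HP (Hv Hl)).
Qed.

Lemma unbiased_appr_normal P Q Q' : U Q Q' -> (normal sred Q -> normal sred Q') ->
  normal sred (App P Q) -> normal sred (App P Q').
Proof.
  intros HQ IH Hn y Hy.
  inversion Hy as [? ? Hr|?|? P' ? Hf HP|? ? Q'' Ha HQ'']; subst.
  - inversion Hr as [B a Ha]; subst.
    apply (Hn (subst 0 Q B)), sred_redex; constructor; intros Hc.
    assert (HQn : normal sred Q).
    { apply (normal_sred_appr (t := Lam B)); [split; [|intros]; cbn; auto|exact Hn]. }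
    apply (unbiased_normal_value HQn HQ), Ha, Hc.
  - apply (Hn (App P' Q)), sred_appl; [|assumption]; intros Hc.
    assert (HQn : normal sred Q).
    { apply (normal_sred_appr (t := P)); [split; [|intro]; congruence|exact Hn]. }
    apply (unbiased_normal_value HQn HQ), Hf, Hc.
  - apply (IH (normal_sred_appr Ha Hn) _ HQ'').
Qed.

Lemma unbiased_normal_sred t t' : U t t' -> normal sred t -> normal sred t'.
Proof.
  induction 1 as [t t' Hs|P P' _ HP IH|P P' Q _ HP IH|P Q Q' _ HQ IH|o l1 P P' l2 _ _ _];
    intros Hn.
  - exfalso; apply (Hn t'), surface_red_sred, Hs.
  - intros y Hy; inversion Hy as [? ? Hr|? P'' Hc HP''| |]; subst; [inversion Hr|].
    apply (IH (normal_sred_lam Hc Hn) _ HP'').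
  - apply (unbiased_appl_normal HP IH Hn).
  - apply (unbiased_appr_normal HQ IH Hn).
  - apply normal_sred_op.
Qed.

Local Notation SN := (Acc (transp tm U)).

Lemma SN_var n : SN (Var n).
Proof.
  constructor; intros y Hy; inversion Hy as [? ? Hs| | | |].
  destruct (normal_sred_var (proj1 (surface_red_sred _ _) Hs)).
Qed.

Lemma SN_lam t : SN t -> SN (Lam t).
Proof.
  induction 1 as [t _ IH]; constructor; intros y Hy.
  inversion Hy as [? ? Hs|? t' _ Ht| | |]; subst.
  - apply surface_red_sred in Hs.
    inversion Hs as [? ? Hr|? t' Hc Ht| |]; subst; [inversion Hr|].
    apply IH, u_surf, surface_red_sred, Ht.
  - apply IH, Ht.
Qed.

Lemma SN_app t u : SN t -> SN u -> normal sred (App t u) -> SN (App t u).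
Proof.
  intros Ht; revert u; induction Ht as [t _ IHt]; intros u Hu.
  induction Hu as [u Hu IHu]; intros Hn; constructor; intros y Hy.
  pose proof (unbiased_normal_sred Hy Hn) as Hn'.
  inversion Hy as [? ? Hs| |? t' ? _ Ht'|? ? u' _ Hu'|]; subst.
  - exfalso; apply (Hn y), surface_red_sred, Hs.
  - apply IHt; [exact Ht'|constructor; exact Hu|exact Hn'].
  - apply IHu; assumption.
Qed.

Lemma SN_op o l : Forall SN l -> SN (Op o l).
Proof.
  intros Hl; apply Acc_list_step in Hl; induction Hl as [l _ IH].
  constructor; intros y Hy; inversion Hy as [? ? Hs| | | |? l1 P P' l2 _ HP]; subst.
  - destruct (normal_sred_op (proj1 (surface_red_sred _ _) Hs)).
  - apply IH; exists l1, P, P', l2; auto.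
Qed.

Lemma sred_random_descent k t m : nsteps sred k t m -> normal sred m ->
  forall t', sred t t' -> exists j, k = S j /\ nsteps sred j t' m.
Proof.
  induction 1 as [m|k t u m Htu Hum IH]; intros Hm t' Ht'.
  - exfalso; apply (Hm t' Ht').
  - destruct (sred_diamond Htu Ht') as [<-|(d & Hud & Ht'd)]; [eauto|].
    destruct (IH Hm d Hud) as (j & -> & Hdm).
    exists (S j); split; [reflexivity|econstructor; eassumption].
Qed.

Lemma SN_sred_expansion m k t : normal sred m -> SN m -> nsteps sred k t m -> SN t.
Proof.
  intros Hm HSN; revert t; induction k as [|k IH]; intros t Hk.
  - inversion Hk; subst; assumption.
  - inversion Hk as [|? ? u ? Htu _]; subst.
    constructor; intros y Hy.
    destruct (sred_random_descent Hk Hm (unbiased_surface Htu Hy)) as (j & [= <-] & Hj).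
    apply IH, Hj.
Qed.

Lemma SN_by_factorization n : normal full n ->
  (forall m, normal sred m -> root_congr (star full) m n -> SN m) ->
  forall t, star full t n -> SN t.
Proof.
  intros Hn HSN t Htn.
  destruct (full_factorization Htn) as (m & Htm & Hmn).
  assert (Hm : normal sred m) by exact (star_ipar_normal Hmn Hn).
  destruct (star_nsteps Htm) as (k & Hk).
  apply (SN_sred_expansion Hm (HSN m Hm (star_ipar_root_congr Hmn)) Hk).
Qed.

Lemma SN_of_normal_form n : normal full n -> forall t, star full t n -> SN t.
Proof.
  induction n as [x|n IH|n1 n2 IH1 IH2|o l' IH] using term_nested_ind;
    intros Hn; apply SN_by_factorization; auto; intros m Hm Hmn;
    inversion Hmn as [|t ? Ht|t ? u ? Ht Hu|? l ? Hl]; subst.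
  - apply SN_var.
  - apply SN_lam, (IH (normal_full_lam Hn) _ Ht).
  - apply SN_app; [apply (IH1 (normal_full_appl Hn) _ Ht)
                  |apply (IH2 (normal_full_appr Hn) _ Hu)|exact Hm].
  - apply SN_op, (Forall2_Forall_l Hl); intros x y Hin Hxy.
    rewrite Forall_forall in IH; apply (IH y Hin (normal_full_op Hn Hin) _ Hxy).
Qed.

Lemma unbiased_or_normal t : (normal sred t -> exists u, U t u) -> exists u, U t u.
Proof.
  intros H; destruct (classic (exists u, sred t u)) as [(u & Hu)|Hn].
  - exists u; apply u_surf, surface_red_sred, Hu.
  - apply H; intros u Hu; apply Hn; exists u; exact Hu.
Qed.

Lemma full_unbiased t u : full t u -> exists u', U t u'.
Proof.
  induction 1 as [t u Hr|t t' _ (v & Hv)|t t' u _ (v & Hv)|t u u' _ (v & Hv)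
                 |o l1 M M' l2 _ (v & Hv)];
    apply unbiased_or_normal; intros Hn; apply normal_surface_red in Hn.
  - exfalso; apply (Hn u), surface_red_sred, sred_redex, root_rule_redex, Hr.
  - exists (Lam v); apply u_lam; assumption.
  - exists (App v u); apply u_appl; assumption.
  - exists (App t v); apply u_appr; assumption.
  - exists (Op o (l1 ++ v :: l2)); apply u_op; assumption.
Qed.

Lemma unbiased_normalizing (carrier : tm -> Prop) : normalizing_strategy O carrier full U.
Proof.
  assert (Hnormal : forall t, normal U t <-> normal full t).
  { split; intros Hn u Hu.
    - destruct (full_unbiased Hu) as (u' & Hu'); apply (Hn u' Hu').
    - apply (Hn u), unbiased_full, Hu. }
  split; [|split].
  - exact unbiased_full.
  - intros t _; apply Hnormal.
  - intros t _ (n & Htn & Hn); split.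
    + apply Acc_no_infinite_chain, (SN_of_normal_form Hn Htn).
    + intros u _; apply Hnormal.
Qed.

End Unbiased.

Theorem mainTheorem5 (O : Type) (arity : O -> nat) (c : calculus) :
  normalizing_strategy O (wf O arity) (full_red O c) (unbiased O c).
Proof. apply unbiased_normalizing. Qed.
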